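(* Let $\mathcal A\subset\mathbb R^n$ be compact with diameter $D_{\mathcal A}<\infty$ and symmetric ($\mathcal A=-\mathcal A$), let $\mathcal X=\mathrm{lin}(\mathcal A)$, let $f$ have $L$-Lipschitz gradient, and let $\eta>1$. Run the AC-FW algorithm with the Matching Pursuit subroutine and a damping sequence satisfying Condition (D), with $L_0>0$. Then the subroutine satisfies parts (i) and (ii) of Condition (S), and for every $t\ge0$, $$|\mathcal G\cap\mathcal I_\eta\cap[t]|\ge t+1-\left\lfloor\log_\eta\!\left(\frac{L}{rL_0}\right)\right\rfloor.$$ If additionally $f$ is convex and $R_{\mathcal A}<\infty$, then part (iii) of Condition (S) holds with $R=R_{\mathcal A}$.
   Context: $D_{\mathcal A}:=\sup_{x,y\in\mathcal A}\|x-y\|_2$; $f:\mathbb R^n\to\mathbb R$ is differentiable with $\|\nabla f(x)-\nabla f(y)\|_2\le L\|x-y\|_2$. $x^\star$ is an optimal solution of $\min_{x\in\mathcal X}f(x)$. Atomic norm: $\|x\|_{\mathcal A}:=\inf\{c>0:x\in c\cdot\mathrm{conv}(\mathcal A)\}$. $R_{\mathcal A}:=\max\{1,\sup\{\|x-x^\star\|_{\mathcal A}:x\in\mathrm{lin}(\mathcal A),\ f(x)\le f(x_0)\}\}$. For $x\ne y$, $\ell(x,y):=2|f(y)-f(x)-\nabla f(x)^\top(y-x)|/\|y-x\|_2^2$, $\ell(x,x):=0$. AC-FW algorithm: given $\{r_t\}_{t\ge0}$ and a subroutine, pick $x_{-1}\in\mathcal A$, $x_0\in\arg\min_{v\in\mathcal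 A}\nabla f(x_{-1})^\top v$, $L_0:=\ell(x_{-1},x_0)$. For $t=0,1,\dots$: $v_t\in\arg\min_{v\in\mathcal A}\nabla f(x_t)^\top v$; the subroutine returns $(d_t,\gamma_t^{\max})$; $\gamma_t:=\min\{\nabla f(x_t)^\top d_t/(L_t\|d_t\|_2^2),\gamma_t^{\max}\}$; $\bar x_{t+1}:=x_t-\gamma_td_t$; $L_{t+1}:=\max\{\ell(x_t,\bar x_{t+1}),r_tL_t\}$; $x_{t+1}:=\bar x_{t+1}$ if $f(\bar x_{t+1})<f(x_t)$, else $x_{t+1}:=x_t$. Matching Pursuit subroutine: $d_t:=-v_t$, $\gamma_t^{\max}:=\infty$. $[t]:=\{0,\dots,t\}$; $\mathcal I_\eta:=\{t\ge0:L_{t+1}\le\eta L_t\}$; $\mathcal G:=\{t\ge0:\gamma_t^{\max}\ge1\text{ or }\gamma_t<\gamma_t^{\max}\}$. Condition (D): $r_t\in(0,1]$ for all $t$ and $r:=\prod_{t\ge0}r_t\in(0,1]$. Condition (S): for all $t\ge0$: (i) $\|d_t\|_2\le D_{\mathcal A}$ and $x_t-\gamma d_t\in\mathcal X$ for all finite $\gamma\in[0,\gamma_t^{\max}]$; (ii) $\mathcal G$ is infinite; (iii) if $f$ is convex, there is $R\ge1$ independent of $t$ with $\nabla f(x_t)^\top d_t\ge(f(x_t)-f(x^\star))/R$. *)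

From HB Require Import structures.
From mathcomp Require Import all_boot all_order all_algebra.
From mathcomp Require Import all_classical all_reals all_analysis.
Set Implicit Arguments. Unset Strict Implicit. Unset Printing Implicit Defensive.
Import Order.TTheory GRing.Theory Num.Theory.
Import numFieldNormedType.Exports.
Local Open Scope classical_set_scope.
Local Open Scope ring_scope.

Section Defs.
Variables (R : realType) (n : nat).
Notation V := 'rV[R]_n.

Definition dot (u w : V) : R := \sum_(i < n) u 0 i * w 0 i.
Definition norm2 (u : V) : R := Num.sqrt (dot u u).

Definition diam (A : set V) : R :=
  sup (fun z : R => exists x y, A x /\ A y /\ z = norm2 (x - y)).

Definition lin (A : set V) : set V :=
  fun x => exists (k : nat) (c : 'I_k -> R) (a : 'I_k -> V),
    (forall i, A (a i)) /\ x = \sum_(i < k) c i *: a i.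

Definition conv (A : set V) : set V :=
  fun x => exists (k : nat) (w : 'I_k -> R) (a : 'I_k -> V),
    (forall i, 0 <= w i) /\ \sum_(i < k) w i = 1 /\
    (forall i, A (a i)) /\ x = \sum_(i < k) w i *: a i.

Definition atomic_norm (A : set V) (x : V) : \bar R :=
  ereal_inf (fun e : \bar R => exists c : R,
    0 < c /\ (exists y, conv A y /\ x = c *: y) /\ e = c%:E).

Definition R_atom (A : set V) (f : V -> R) (xstar x0 : V) : \bar R :=
  maxe 1%E (ereal_sup (fun e : \bar R => exists y,
    lin A y /\ f y <= f x0 /\ e = atomic_norm A (y - xstar))).

Definition ell (f : V -> R) (grad : V -> V) (x y : V) : R :=
  if x == y then 0
  else 2 * `|f y - f x - dot (grad x) (y - x)| / (norm2 (y - x)) ^+ 2.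

Definition lmo (A : set V) (g v : V) : Prop :=
  A v /\ forall u, A u -> dot g v <= dot g u.

Definition convex_fun (f : V -> R) : Prop :=
  forall x y (lam : R), 0 <= lam <= 1 ->
    f (lam *: x + (1 - lam) *: y) <= lam * f x + (1 - lam) * f y.

Definition is_gradient (f : V -> R) (grad : V -> V) : Prop :=
  forall x, differentiable f x /\ forall h, 'd f x h = dot (grad x) h.

Definition lipschitz_grad (grad : V -> V) (L : R) : Prop :=
  forall x y, norm2 (grad x - grad y) <= L * norm2 (x - y).

(* A run of AC-FW with damping sequence rs, given the subroutine outputs
   d t and gmax t (gmax t in [0, +oo], an extended real).
   Here x t = x_t, xm1 = x_{-1}, v t = v_t, gam t = gamma_t,
   xbar t.+1 = bar x_{t+1}, L t = L_t. *)
Definition ACFW_run (A : set V) (f : V -> R) (grad : V -> V) (rs : nat -> R)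
  (xm1 : V) (x v d xbar : nat -> V) (gmax : nat -> \bar R) (gam L : nat -> R) : Prop :=
  A xm1 /\ lmo A (grad xm1) (x 0%N) /\ L 0%N = ell f grad xm1 (x 0%N) /\
  forall t : nat,
    lmo A (grad (x t)) (v t) /\
    (gam t)%:E = mine ((dot (grad (x t)) (d t) / (L t * norm2 (d t) ^+ 2))%:E) (gmax t) /\
    xbar t.+1 = x t - gam t *: d t /\
    L t.+1 = Num.max (ell f grad (x t) (xbar t.+1)) (rs t * L t) /\
    x t.+1 = (if f (xbar t.+1) < f (x t) then xbar t.+1 else x t).

Definition MP_sub (v d : nat -> V) (gmax : nat -> \bar R) : Prop :=
  forall t, d t = - v t /\ gmax t = +oo%E.

Definition inG (gmax : nat -> \bar R) (gam : nat -> R) (t : nat) : bool :=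
  ((1%:E <= gmax t)%E || ((gam t)%:E < gmax t)%E).

Definition inI (eta : R) (L : nat -> R) (t : nat) : bool := L t.+1 <= eta * L t.

Definition count_GI (gmax : nat -> \bar R) (gam : nat -> R) (eta : R) (L : nat -> R)
  (t : nat) : nat :=
  count (fun i => inG gmax gam i && inI eta L i) (iota 0 t.+1).

Definition condD (rs : nat -> R) (r : R) : Prop :=
  (forall t, 0 < rs t <= 1) /\
  ((fun T : nat => \prod_(i < T) rs i) @ \oo --> r) /\ 0 < r <= 1.

End Defs.

From Pilot Require Import Defs.
From HB Require Import structures.
From mathcomp Require Import all_boot all_order all_algebra.
From mathcomp Require Import all_classical all_reals all_analysis.
From mathcomp Require Import ring lra.
Set Implicit Arguments.
Unset Strict Implicit.
Unset Printing Implicit Defensive.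
Import Order.TTheory GRing.Theory Num.Theory.
Import numFieldNormedType.Exports.
Local Open Scope ring_scope.

(* Since gamma_t^max = +oo under Matching Pursuit, every step lies in G and the
   iterates x_t + gamma_t v_t stay in lin(A).  The descent lemma bounds every
   curvature estimate ell by L, hence L_t <= L; on the other hand L_t is
   multiplied by more than eta at each step outside I_eta and by at least r_t
   at every step, so r eta^m L_0 <= L for the number m of steps outside I_eta.
   For (iii), symmetry of A makes -v_t a maximiser of <grad f(x_t), .> over A,
   hence over conv(A); with convexity this gives
   f(x_t) - f(x⋆) <= <grad f(x_t), x_t - x⋆> <= ||x_t - x⋆||_A <grad f(x_t), d_t>. *)

Section Dot.
Variables (R : realType) (n : nat).
Local Notation V := 'rV[R]_n.
Implicit Types u w y : V.

Lemma dotC u w : dot u w = dot w u.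
Proof. by apply: eq_bigr => i _; rewrite mulrC. Qed.

Lemma dotDr u w y : dot u (w + y) = dot u w + dot u y.
Proof. by rewrite /dot -big_split; apply: eq_bigr => i _; rewrite !mxE mulrDr. Qed.

Lemma dotDl u w y : dot (w + y) u = dot w u + dot y u.
Proof. by rewrite dotC dotDr !(dotC u). Qed.

Lemma dotZr c u w : dot u (c *: w) = c * dot u w.
Proof. by rewrite /dot mulr_sumr; apply: eq_bigr => i _; rewrite !mxE mulrCA. Qed.

Lemma dotZl c u w : dot (c *: u) w = c * dot u w.
Proof. by rewrite dotC dotZr dotC. Qed.

Lemma dotNr u w : dot u (- w) = - dot u w.
Proof. by rewrite -scaleN1r dotZr mulN1r. Qed.

Lemma dotNl u w : dot (- u) w = - dot u w.
Proof. by rewrite dotC dotNr dotC. Qed.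

Lemma dotBr u w y : dot u (w - y) = dot u w - dot u y.
Proof. by rewrite dotDr dotNr. Qed.

Lemma dotBl u w y : dot (w - y) u = dot w u - dot y u.
Proof. by rewrite dotDl dotNl. Qed.

Lemma dot0l u : dot 0 u = 0.
Proof. by rewrite /dot big1 // => i _; rewrite mxE mul0r. Qed.

Lemma dot_ge0 u : 0 <= dot u u.
Proof. by apply: sumr_ge0 => i _; rewrite -expr2 sqr_ge0. Qed.

Lemma dot_eq0 u : (dot u u == 0) = (u == 0).
Proof.
apply/idP/eqP => [|->]; last by rewrite dot0l.
rewrite psumr_eq0 => [/allP u0|i _]; last by rewrite -expr2 sqr_ge0.
apply/rowP => i; rewrite mxE.
by have /u0 := mem_index_enum i; rewrite /= mulf_eq0 orbb => /eqP.
Qed.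

Lemma dot_sumr k (c : 'I_k -> R) (a : 'I_k -> V) u :
  dot u (\sum_(i < k) c i *: a i) = \sum_(i < k) c i * dot u (a i).
Proof.
elim: k c a => [|k IH] c a; first by rewrite !big_ord0 dotC dot0l.
by rewrite !big_ord_recr /= dotDr IH dotZr.
Qed.

Lemma norm2_ge0 u : 0 <= norm2 u.
Proof. exact: sqrtr_ge0. Qed.

Lemma norm2_sq u : norm2 u ^+ 2 = dot u u.
Proof. by rewrite sqr_sqrtr // dot_ge0. Qed.

Lemma norm2Z c u : norm2 (c *: u) = `|c| * norm2 u.
Proof. by rewrite /norm2 dotZl dotZr mulrA sqrtrM ?sqr_ge0 // -expr2 sqrtr_sqr. Qed.

Lemma norm2N u : norm2 (- u) = norm2 u.
Proof. by rewrite /norm2 dotNl dotNr opprK. Qed.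

Lemma norm2_gt0 u : u != 0 -> 0 < norm2 u.
Proof.
by move=> u0; rewrite sqrtr_gt0 lt_def dot_eq0 u0 dot_ge0.
Qed.

Lemma cauchy_schwarz u w : dot u w <= norm2 u * norm2 w.
Proof.
have [->|u0] := eqVneq u 0; first by rewrite dot0l mulr_ge0 ?norm2_ge0.
set a := dot u u; set b := dot w w; set D := dot u w.
have a_gt0 : 0 < a by rewrite /a -norm2_sq exprn_gt0 // norm2_gt0.
(* the quadratic s |-> ||s u - w||^2 is nonnegative at its minimiser s = D / a *)
have := dot_ge0 ((D / a) *: u - w).
rewrite dotBl !dotBr !dotZl !dotZr (dotC w u) -/a -/b -/D.
have -> : D / a * (D / a * a) - D / a * D - (D / a * D - b) = b - D ^+ 2 / a.
  by field; rewrite gt_eqF.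
rewrite subr_ge0 ler_pdivrMr // => D2_le.
rewrite -sqrtrM ?dot_ge0 //; apply: le_trans (ler_norm D) _.
by rewrite -sqrtr_sqr ler_wsqrtr // mulrC.
Qed.

Lemma normr_dot_le u w : `|dot u w| <= norm2 u * norm2 w.
Proof.
rewrite ler_norml cauchy_schwarz andbT lerNl -dotNl.
by rewrite -(norm2N u) cauchy_schwarz.
Qed.

End Dot.

Section Atoms.
Variables (R : realType) (n : nat) (A : set 'rV[R]_n).

Lemma lin0 : lin A 0.
Proof. by exists 0%N, (fun=> 0), (fun=> 0); split=> [[]//|]; rewrite big_ord0. Qed.

Lemma lin_add_atom y a c : lin A y -> A a -> lin A (y + c *: a).
Proof.
move=> [k [c1 [a1 [Aa1 ->]]]] Aa.
exists k.+1, (fun i => if unlift ord0 i is Some j then c1 j else c),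
  (fun i => if unlift ord0 i is Some j then a1 j else a); split.
  by move=> i; case: (unlift ord0 i).
rewrite big_ord_recl unlift_none addrC; congr (_ + _).
by apply: eq_bigr => i _; rewrite liftK.
Qed.

Lemma lin_atom a : A a -> lin A a.
Proof. by move=> Aa; rewrite -(add0r a) -(scale1r a); apply: lin_add_atom (lin0) Aa. Qed.

Lemma le_atomic_norm (u : 'rV[R]_n) (z : R) :
  (forall c y, 0 < c -> Defs.conv A y -> u = c *: y -> z <= c) ->
  (z%:E <= atomic_norm A u)%E.
Proof.
move=> z_le; apply: le_ereal_inf_tmp => _ [c [c0 [[y [Ay uE]] ->]]].
by rewrite lee_fin (z_le c y).
Qed.

Lemma R_atom_ge1 f xstar x0 : (1 <= R_atom A f xstar x0)%E.
Proof. by rewrite /R_atom le_max lexx. Qed.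

Lemma R_atom_fineK f xstar x0 : (R_atom A f xstar x0 < +oo)%E ->
  R_atom A f xstar x0 = (fine (R_atom A f xstar x0))%:E.
Proof.
move=> RA_fin; rewrite fineK // fin_numE (lt_eqF RA_fin) andbT.
by apply: contraTneq (R_atom_ge1 f xstar x0) => ->; rewrite leeNy_eq.
Qed.

End Atoms.

Section Diameter.
Variables (R : realType) (n : nat).
Local Notation V := 'rV[R]_n.

Lemma dot_self_le_norm (u : V) : dot u u <= n%:R * `|u| ^+ 2.
Proof.
apply: (@le_trans _ _ (\sum_(i < n) `|u| ^+ 2)); last first.
  by rewrite sumr_const card_ord mulr_natl.
apply: ler_sum => i _; rewrite -expr2 -real_normK ?num_real //.
rewrite lerXn2r ?nnegrE ?normr_ge0 //.
have -> : `|u| = mx_norm u by [].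
rewrite mx_normrE.
exact: (le_bigmax 0 (fun ij : 'I_1 * 'I_n => `|u ij.1 ij.2|) (0, i)).
Qed.

Lemma diam_set_ubound (A : set V) : compact A ->
  has_ubound (fun z : R => exists x y, A x /\ A y /\ z = norm2 (x - y)).
Proof.
move=> /compact_bounded[M [_ AM]].
have A_le x : A x -> `|x| <= M + 1 by move=> Ax; apply: AM => //; rewrite ltrDl.
exists (Num.sqrt (n%:R * (2 * (M + 1)) ^+ 2)) => _ [x [y [Ax [Ay ->]]]].
apply: ler_wsqrtr; apply: le_trans (dot_self_le_norm _) _.
rewrite ler_wpM2l // lerXn2r ?nnegrE ?normr_ge0 //.
  by rewrite mulr_ge0 // (le_trans (normr_ge0 x) (A_le x Ax)).
by rewrite (le_trans (ler_normB _ _)) // mulrDl mul1r lerD ?A_le.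
Qed.

(* For symmetric A the pair (a, -a) realises the distance 2 ||a|| >= ||a||. *)
Lemma norm2_le_diam (A : set V) a : compact A -> (forall y, A y <-> A (- y)) ->
  A a -> norm2 a <= diam A.
Proof.
move=> cA symA Aa.
have : norm2 (a - - a) <= diam A.
  apply: ub_le_sup; first exact: diam_set_ubound.
  by exists a, (- a); rewrite -symA.
rewrite opprK -mulr2n -(scaler_nat 2) norm2Z; apply: le_trans.
by rewrite ger0_norm // ler_peMl ?norm2_ge0 // ler1n.
Qed.

End Diameter.

Section Smoothness.
Variables (R : realType) (n : nat).
Local Notation V := 'rV[R]_n.
Variables (f : V -> R) (grad : V -> V).
Hypothesis f_grad : is_gradient f grad.

Lemma is_derive_line (x u : V) (s : R) :
  is_derive s (1 : R) (fun t : R => f (x + t *: u)) (dot (grad (x + s *: u)) u).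
Proof.
have [df dfE] := f_grad (x + s *: u).
have quotE : (fun h : R => h^-1 *: (((fun t : R => f (x + t *: u)) \o shift s)
      (h *: (1 : R)) - f (x + s *: u)))
    = (fun h : R => h^-1 *: ((f \o shift (x + s *: u)) (h *: u) - f (x + s *: u))).
  apply/funext => h /=; congr (_ *: (f _ - _)).
  by rewrite -[h%:A]/(h * 1) mulr1 scalerDl addrCA addrA.
apply: DeriveDef; first by rewrite /derivable quotE; exact: diff_derivable.
by rewrite /derive quotE -/(derive f (x + s *: u) u) deriveE.
Qed.

Lemma convex_first_order : convex_fun f ->
  forall x y, f x + dot (grad x) (y - x) <= f y.
Proof.
move=> f_cvx x y; set u := y - x.
have := is_derive_line x u 0; rewrite scale0r addr0 => -[der der_eq].
set q := (fun h : R => h^-1 *: (((fun t : R => f (x + t *: u)) \o shift 0)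
  (h *: (1 : R)) - f (x + 0 *: u))).
have q_cvg : (q @ 0^' --> dot (grad x) u)%classic by rewrite -der_eq; exact: der.
have right_sub : ((0 : R)^'+ `=>` (0 : R)^')%classic.
  move=> P; rewrite /dnbhs /within /=; apply: filterS => z Pz z0.
  by apply: Pz; rewrite gt_eqF.
have q_cvg_right := cvg_trans (cvg_fmap2 right_sub) q_cvg.
(* the difference quotients of the convex function t |-> f (x + t u) on (0, 1]
   are bounded by f y - f x *)
rewrite -lerBrDl; apply: (cvgr_to_le q_cvg_right); near=> h.
have h0 : 0 < h by near: h; exact: nbhs_right_gt.
have h1 : h <= 1 by near: h; apply: nbhs_right_le; exact: ltr01.
rewrite /q /= scale0r addr0 -[h%:A]/(h * 1) mulr1 addr0.
have := f_cvx y x h; rewrite (ltW h0) h1 => /(_ isT).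
have -> : h *: y + (1 - h) *: x = x + h *: u.
  by rewrite /u scalerBr scalerBl scale1r addrCA addrA.
move=> cvx; rewrite /GRing.scale /= ler_pdivrMl //.
lra.
Unshelve. all: by end_near.
Qed.

Variable Lf : R.
Hypothesis grad_lip : lipschitz_grad grad Lf.

Lemma lipschitz_grad_ge0 (x y : V) : x != y -> 0 <= Lf.
Proof.
move=> xy; have xy_gt0 : 0 < norm2 (x - y) by rewrite norm2_gt0 // subr_eq0.
by rewrite -(pmulr_lge0 _ xy_gt0) (le_trans (norm2_ge0 _) (grad_lip x y)).
Qed.

Lemma grad_incr_line (x u : V) (c : R) : 0 <= c ->
  `|dot (grad (x + c *: u) - grad x) u| <= Lf * c * norm2 u ^+ 2.
Proof.
move=> c0; apply: le_trans (normr_dot_le _ _) _.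
rewrite expr2 mulrA ler_wpM2r ?norm2_ge0 //.
by apply: le_trans (grad_lip _ _) _; rewrite addrC addKr norm2Z ger0_norm // mulrA.
Qed.

(* Mean value theorem for h(t) = sg (f (x + t u) - t <grad x, u>) - L/2 ||u||^2 t^2 on [0, 1];
   sg = 1 and sg = -1 give the two halves of the descent lemma. *)
Lemma descent_signed (sg : R) (x y : V) : `|sg| = 1 ->
  sg * (f y - f x - dot (grad x) (y - x)) <= Lf / 2 * norm2 (y - x) ^+ 2.
Proof.
move=> sg1.
set u := y - x; set D0 := dot (grad x) u; set N := norm2 u ^+ 2.
set G := fun t : R => f (x + t *: u).
pose h := sg \*: (G - D0 \*: id) - (Lf / 2 * N) \*: (id ^+ 2).
have hE t : h t = sg * (G t - D0 * t) - Lf / 2 * N * t ^+ 2.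
  by rewrite /h /= !fctE.
have h_der c : is_derive c (1 : R) h
    (sg * (dot (grad (x + c *: u)) u - D0) - Lf / 2 * N * (2 * c)).
  have G_der := is_derive_line x u c; apply: is_derive_eq.
  by rewrite /GRing.scale /= !mulr1 expr1.
have h_cont : {within `[0, 1], continuous h}%classic.
  by apply: derivable_within_continuous => t _; have [] := h_der t.
have [c c01 hE01] := MVT ltr01 (fun c _ => h_der c) h_cont.
move: c01; rewrite in_itv /= => /andP[c0 _].
have incr : sg * (dot (grad (x + c *: u)) u - D0) <= Lf * c * N.
  rewrite /D0 -dotBl; apply: le_trans (ler_norm _) _.
  by rewrite normrM sg1 mul1r grad_incr_line ?ltW.
move: hE01; rewrite !hE /G scale0r addr0 scale1r.
have -> : x + u = y by rewrite /u addrC subrK.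
rewrite mulr1 mulr0 subr0 expr1n expr0n /= mulr0 subr0 mulr1.
move: incr; rewrite -/N !mulrBr; lra.
Qed.

Lemma descent_lemma (x y : V) :
  `|f y - f x - dot (grad x) (y - x)| <= Lf / 2 * norm2 (y - x) ^+ 2.
Proof.
rewrite ler_norml lerNl -mulN1r descent_signed ?normrN ?normr1 //=.
by rewrite -[X in X <= _]mul1r descent_signed ?normr1.
Qed.

Lemma ell_le (x y : V) : 0 <= Lf -> ell f grad x y <= Lf.
Proof.
rewrite /ell; have [//|xy _] := eqVneq x y.
have N_gt0 : 0 < norm2 (y - x) ^+ 2.
  by rewrite exprn_gt0 // norm2_gt0 // subr_eq0 eq_sym.
rewrite ler_pdivrMr // -ler_pdivlMl // mulrC.
by rewrite mulrAC descent_lemma.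
Qed.

End Smoothness.

Section Damping.
Variables (R : realType) (rs l L : nat -> R) (r eta Lf : R).
Hypotheses (rs_pos : forall t, 0 < rs t <= 1)
  (prod_rs_cvg : ((fun T : nat => \prod_(i < T) rs i) @ \oo --> r)%classic)
  (r_gt0 : 0 < r) (eta_gt1 : 1 < eta)
  (L0_gt0 : 0 < L 0%N) (L0_le : L 0%N <= Lf) (l_le : forall t, l t <= Lf)
  (L_next : forall t, L t.+1 = Num.max (l t) (rs t * L t)).

Let m T := count (predC (inI eta L)) (iota 0 T).

Lemma damped_gt0 t : 0 < L t.
Proof.
elim: t => // t IH; have [rs_gt0 _] := andP (rs_pos t).
by rewrite L_next lt_max mulr_gt0 ?orbT.
Qed.

Lemma damped_le t : L t <= Lf.
Proof.
elim: t => // t IH; have [_ rs_le1] := andP (rs_pos t).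
rewrite L_next ge_max l_le /=; apply: le_trans IH.
by rewrite ler_piMl // ltW // damped_gt0.
Qed.

Lemma prod_rs_ge T : r <= \prod_(i < T) rs i.
Proof.
have nonincr : {homo (fun T => \prod_(i < T) rs i) : a b / (a <= b)%N >-> b <= a}.
  move=> a b /subnK <-; elim: (b - a)%N => [|k IH]; first by rewrite add0n.
  rewrite addSn big_ord_recr /=; apply: le_trans IH.
  have [_ rs_le1] := andP (rs_pos (k + a)%N).
  by rewrite ler_piMr // prodr_ge0 // => i _; case/andP: (rs_pos i) => /ltW.
have prod_cvgn : cvgn (fun T => \prod_(i < T) rs i) by apply/cvg_ex; exists r.
by have := nonincreasing_cvgn_ge nonincr prod_cvgn T; rewrite (cvg_lim _ prod_rs_cvg).
Qed.

Lemma damped_lower T : \prod_(i < T) rs i * eta ^+ m T * L 0%N <= L T.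
Proof.
elim: T => [|T IH]; first by rewrite big_ord0 /m /= expr0 !mul1r.
have [rs_gt0 rs_le1] := andP (rs_pos T).
have eta_gt0 : 0 < eta := lt_trans ltr01 eta_gt1.
have step : rs T * eta ^+ (~~ inI eta L T) * L T <= L T.+1.
  have [_|notI] := boolP (inI eta L T).
    by rewrite expr0 mulr1 L_next le_max lexx orbT.
  rewrite expr1 -mulrA; apply: le_trans (_ : eta * L T <= _); last first.
    by rewrite ltW // ltNge.
  by rewrite ler_piMl // mulr_ge0 // ltW // damped_gt0.
rewrite /m -addn1 iotaD count_cat /= add0n addn0 addn1 exprD big_ord_recr /=.
apply: le_trans step.
have -> : \prod_(i < T) rs i * rs T * (eta ^+ m T * eta ^+ (~~ inI eta L T)) * L 0%N
    = rs T * eta ^+ (~~ inI eta L T) * (\prod_(i < T) rs i * eta ^+ m T * L 0%N).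
  by rewrite /m; ring.
by apply: ler_wpM2l IH; rewrite mulr_ge0 ?exprn_ge0 // ltW.
Qed.

Lemma count_notI_le_log T : (m T)%:R <= ln (Lf / (r * L 0%N)) / ln eta.
Proof.
have eta_gt0 : 0 < eta := lt_trans ltr01 eta_gt1.
have rL0_gt0 : 0 < r * L 0%N by rewrite mulr_gt0.
have etam_le : eta ^+ m T <= Lf / (r * L 0%N).
  rewrite ler_pdivlMr // mulrCA mulrA.
  apply: le_trans (le_trans (damped_lower T) (damped_le T)).
  by rewrite ler_wpM2r ?(ltW L0_gt0) // ler_wpM2r ?exprn_ge0 ?prod_rs_ge // ltW.
rewrite ler_pdivlMr ?ln_gt0 // mulrC mulr_natr -lnXn //.
have etam_gt0 : 0 < eta ^+ m T by rewrite exprn_gt0.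
by rewrite ler_ln // posrE (lt_le_trans etam_gt0).
Qed.

Lemma count_inI_ge t :
  (t.+1)%:R - (Num.floor (ln (Lf / (r * L 0%N)) / ln eta))%:~R
    <= (count (inI eta L) (iota 0 t.+1))%:R :> R.
Proof.
have m_le : (m t.+1)%:Z <= Num.floor (ln (Lf / (r * L 0%N)) / ln eta).
  by rewrite floor_ge_int count_notI_le_log.
have m_size : (m t.+1 <= t.+1)%N.
  by rewrite -[X in (_ <= X)%N](size_iota 0 t.+1) count_size.
have <- : (t.+1 - m t.+1)%N = count (inI eta L) (iota 0 t.+1).
  by rewrite -[X in (X - _)%N](size_iota 0 t.+1) -(count_predC (inI eta L)) addnK.
by rewrite natrB // lerD2l lerN2 -(ler_int R) in m_le *.
Qed.

End Damping.

Section SymmetricLMO.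
Variables (R : realType) (n : nat) (A : set 'rV[R]_n) (g v : 'rV[R]_n).
Hypotheses (symA : forall y, A y <-> A (- y)) (v_lmo : lmo A g v).

Lemma lmo_sym_max a : A a -> dot g a <= dot g (- v).
Proof.
by move=> Aa; rewrite dotNr lerNr -dotNr; apply: v_lmo.2; rewrite -symA.
Qed.

Lemma lmo_sym_ge0 : 0 <= dot g (- v).
Proof. by have := lmo_sym_max v_lmo.1; rewrite dotNr; lra. Qed.

Lemma conv_dot_le y : Defs.conv A y -> dot g y <= dot g (- v).
Proof.
move=> [k [w [a [w_ge0 [w_sum1 [Aa ->]]]]]]; rewrite dot_sumr.
apply: (@le_trans _ _ (\sum_(i < k) w i * dot g (- v))).
  by apply: ler_sum => i _; rewrite ler_wpM2l ?lmo_sym_max.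
by rewrite -mulr_suml w_sum1 mul1r.
Qed.

Lemma lmo_sym_gap_le u (E Rb : R) : E <= dot g u ->
  (atomic_norm A u <= Rb%:E)%E -> 0 < Rb -> E / Rb <= dot g (- v).
Proof.
move=> E_le u_le Rb_gt0; rewrite ler_pdivrMr //.
have [E_le0|E_gt0] := leP E 0.
  exact: le_trans E_le0 (mulr_ge0 lmo_sym_ge0 (ltW Rb_gt0)).
have rep_le c y : 0 < c -> Defs.conv A y -> u = c *: y -> E <= c * dot g (- v).
  move=> c_gt0 Ay uE; apply: le_trans E_le _; rewrite uE.
  by rewrite dotZr ler_wpM2l ?(ltW c_gt0) // conv_dot_le.
have [M_eq0|M_neq0] := eqVneq (dot g (- v)) 0.
  (* then u admits no representation, so its atomic norm is +oo *)
  have : ((Rb + 1)%:E <= atomic_norm A u)%E.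
    apply: le_atomic_norm => c y c_gt0 Ay uE.
    by have := rep_le c y c_gt0 Ay uE; rewrite M_eq0 mulr0 => /(lt_le_trans E_gt0); rewrite ltxx.
  by move=> /le_trans /(_ u_le); rewrite lee_fin; lra.
have M_gt0 : 0 < dot g (- v) by rewrite lt_def M_neq0 lmo_sym_ge0.
have u_ge : ((E / dot g (- v))%:E <= atomic_norm A u)%E.
  by apply: le_atomic_norm => c y c_gt0 Ay uE; rewrite ler_pdivrMr // (rep_le c y).
by have := le_trans u_ge u_le; rewrite lee_fin ler_pdivrMr // mulrC.
Qed.

End SymmetricLMO.

Section MatchingPursuit.
Variables (R : realType) (n : nat) (A : set 'rV[R]_n) (f : 'rV[R]_n -> R).
Variables (grad : 'rV[R]_n -> 'rV[R]_n) (rs : nat -> R) (xm1 : 'rV[R]_n).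
Variables (x v d xbar : nat -> 'rV[R]_n) (gmax : nat -> \bar R) (gam L : nat -> R).
Hypotheses (run : ACFW_run A f grad rs xm1 x v d xbar gmax gam L)
  (mp : MP_sub v d gmax).

Lemma ACFW_objective_le t : f (x t) <= f (x 0%N).
Proof.
have [_ [_ [_ step]]] := run.
elim: t => // t IH; have [_ [_ [_ [_ ->]]]] := step t.
by case: ifP => // /ltW /le_trans; apply.
Qed.

Lemma MP_iterate_lin t : lin A (x t).
Proof.
have [_ [[Ax0 _] [_ step]]] := run.
elim: t => [|t IH]; first exact: lin_atom.
have [[Av _] [_ [xbarE [_ ->]]]] := step t; case: ifP => // _.
by rewrite xbarE (mp t).1 scalerN opprK; apply: lin_add_atom.
Qed.

Lemma MP_step_lin t g : lin A (x t - g *: d t).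
Proof.
have [[Av _] _] := run.2.2.2 t.
by rewrite (mp t).1 scalerN opprK; apply: lin_add_atom (MP_iterate_lin t) Av.
Qed.

Lemma MP_inG t : inG gmax gam t.
Proof. by rewrite /inG (mp t).2 ltry orbT. Qed.

Variable Lf : R.
Hypotheses (f_grad : is_gradient f grad) (grad_lip : lipschitz_grad grad Lf).

Lemma MP_count_GI_ge eta r : 1 < eta -> condD rs r -> 0 < L 0%N -> forall t,
  (t.+1)%:R - (Num.floor (ln (Lf / (r * L 0%N)) / ln eta))%:~R
    <= (count_GI gmax gam eta L t)%:R :> R.
Proof.
move=> eta_gt1 [rs_pos [rs_cvg /andP[r_gt0 _]]] L0_gt0 t.
have [_ [_ [L0E step]]] := run.
have Lf_ge0 : 0 <= Lf.
  apply: (lipschitz_grad_ge0 grad_lip (x := xm1) (y := x 0%N)).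
  by apply: contraTneq L0_gt0 => xm1E; rewrite L0E xm1E /ell eqxx ltxx.
have L_next t' : L t'.+1 = Num.max (ell f grad (x t') (xbar t'.+1)) (rs t' * L t').
  by have [_ [_ [_ [->]]]] := step t'.
have -> : count_GI gmax gam eta L t = count (inI eta L) (iota 0 t.+1).
  by apply: eq_count => i; rewrite MP_inG.
apply: (count_inI_ge rs_pos rs_cvg r_gt0 eta_gt1 L0_gt0 _ _ L_next).
  by rewrite L0E ell_le.
by move=> t'; apply: ell_le.
Qed.

Hypothesis symA : forall y, A y <-> A (- y).

Lemma MP_gap_le xstar : convex_fun f -> (R_atom A f xstar (x 0%N) < +oo)%E ->
  forall t, (f (x t) - f xstar) / fine (R_atom A f xstar (x 0%N)) <= dot (grad (x t)) (d t).
Proof.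
move=> f_cvx RA_fin t; rewrite (mp t).1.
apply: (lmo_sym_gap_le symA (run.2.2.2 t).1 (u := x t - xstar)).
- have := convex_first_order f_grad f_cvx (x t) xstar.
  by rewrite !dotBr; lra.
- rewrite -R_atom_fineK // le_max; apply/orP; right.
  apply: ereal_sup_ubound; exists (x t).
  by split; [exact: MP_iterate_lin | split; [exact: ACFW_objective_le |]].
- by rewrite (lt_le_trans ltr01) // -lee_fin -R_atom_fineK // R_atom_ge1.
Qed.

End MatchingPursuit.

Theorem lemma6 (R : realType) (n : nat) (A : set 'rV[R]_n)
  (f : 'rV[R]_n -> R) (grad : 'rV[R]_n -> 'rV[R]_n) (Lf eta : R)
  (rs : nat -> R) (r : R)
  (xm1 : 'rV[R]_n) (x v d xbar : nat -> 'rV[R]_n)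
  (gmax : nat -> \bar R) (gam L : nat -> R) :
  compact A ->
  (forall y, A y <-> A (- y)) ->
  is_gradient f grad ->
  lipschitz_grad grad Lf ->
  1 < eta ->
  condD rs r ->
  ACFW_run A f grad rs xm1 x v d xbar gmax gam L ->
  MP_sub v d gmax ->
  0 < L 0%N ->
  (* Condition (S)(i) *)
  (forall t : nat, norm2 (d t) <= diam A /\
     (forall g : R, 0 <= g -> (g%:E <= gmax t)%E -> lin A (x t - g *: d t))) /\
  (* Condition (S)(ii) *)
  infinite_set (fun t : nat => inG gmax gam t) /\
  (* counting bound *)
  (forall t : nat,
     (t.+1)%:R - (Num.floor (ln (Lf / (r * L 0%N)) / ln eta))%:~R
       <= ((count_GI gmax gam eta L t)%:R : R)) /\
  (* Condition (S)(iii) with R = R_A, in the convex case *)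
  (forall xstar : 'rV[R]_n,
     lin A xstar -> (forall y, lin A y -> f xstar <= f y) ->
     convex_fun f ->
     (R_atom A f xstar (x 0%N) < +oo)%E ->
     1 <= fine (R_atom A f xstar (x 0%N)) /\
     forall t : nat,
       (f (x t) - f xstar) / fine (R_atom A f xstar (x 0%N)) <= dot (grad (x t)) (d t)).
Proof.
move=> cA symA f_grad grad_lip eta_gt1 rsD run mp L0_gt0.
split.
  move=> t; split=> [|g _ _]; last exact: MP_step_lin run mp t g.
  have [[Av _] _] := run.2.2.2 t.
  by rewrite (mp t).1 norm2N norm2_le_diam.
split.
  by apply: sub_infinite_set infinite_nat => t _; exact: MP_inG _ mp t.
split; first exact (MP_count_GI_ge run mp f_grad grad_lip eta_gt1 rsD L0_gt0).
move=> xstar _ _ f_cvx RA_fin; split; last exact (MP_gap_le run mp f_grad symA f_cvx RA_fin).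
by rewrite -lee_fin -R_atom_fineK // R_atom_ge1.
Qed.
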